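(* Let $\widetilde{T_k},\widetilde{S_k}\in J(Z)$ ($k=1,\dots,m$) be any polynomials whose images under the canonical homomorphism $J(Z)\to J(B_m)$ are $T_k$ and $S_k$ respectively. Consider the set $\mathcal P$ of polynomials $$x_1^{k_0}(\widetilde{S_m})^{\delta_m}\cdots(\widetilde{S_1})^{\delta_1}(\widetilde{T_m})^{k_m}\cdots(\widetilde{T_1})^{k_1},$$ (with any fixed arrangement of parentheses) where $k_0,\dots,k_m\ge0$, $\delta_l\in\{0,1\}$ and $\delta_l\ne0$ for at most one $l\in\{1,\dots,m\}$. Then for every subset $S\subseteq\mathcal P$ there is a finite subset $\widehat S\subseteq S$ such that every polynomial in $S$ is a consequence of $\widehat S\cup\mathrm{Id}_2(B_m)$, i.e. belongs to the $T_2$-ideal of $J(Z)$ generated by $\widehat S\cup \mathrm{Id}_2(B_m)$.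
   Context: $K$ is a field of characteristic zero, $m>1$, and $B_m=K\oplus V$ is the Jordan algebra of a nondegenerate symmetric bilinear form $f$ on an $m$-dimensional space $V$, with product $(\alpha+u)(\beta+v)=(\alpha\beta+f(u,v))+(\alpha v+\beta u)$ and grading $(B_m)_0=K$, $(B_m)_1=V$. $J(Z)$ is the free Jordan algebra on even variables $x_1,x_2,\dots$ and odd variables $y_1,y_2,\dots$, graded by parity of the number of $y$'s; $\mathrm{Id}_2(B_m)$ is the ideal of graded identities of $B_m$ (polynomials vanishing under all substitutions of $x$'s by elements of $K$ and $y$'s by elements of $V$); a $T_2$-ideal is an ideal of $J(Z)$ invariant under all grading-preserving endomorphisms; $J(B_m)=J(Z)/\mathrm{Id}_2(B_m)$. In $J(B_m)$: $T_j=\det(y_ay_b)_{a,b=1}^j$ and $S_j=\sum_{\sigma\in S_j}(-1)^\sigma y_{\sigma(1)}(y_1y_{\sigma(2)})\cdots(y_{j-1}y_{\sigma(j)})$, products of several factors being independent of bracketing in $J(B_m)$. $x_1^{0}$ and zero exponents mean the factor is omitted. *)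

From HB Require Import structures.
From mathcomp Require Import all_boot all_order all_algebra all_fingroup.
Set Implicit Arguments. Unset Strict Implicit. Unset Printing Implicit Defensive.
Import GRing.Theory.
Local Open Scope ring_scope.

(* ---------- Syntax of (nonassociative) polynomials in Z = {x_i} u {y_i} --------
   Xv i is the even variable x_(i+1), Yv i the odd variable y_(i+1).
   Elements of J(Z) are represented by terms; two terms denote the same element
   of J(Z) iff they are related by [cong (fun _ => False)] below.            *)
Inductive term (K : Type) : Type :=
  | Xv of nat
  | Yv of nat
  | Zero
  | Add of term K & term K
  | Scale of K & term K
  | Mul of term K & term K.
Arguments Xv {K}. Arguments Yv {K}. Arguments Zero {K}.

Section Terms.
Variable K : fieldType.

Fixpoint memT (t : term K) (s : seq (term K)) : Prop :=
  if s is u :: s' then u = t \/ memT t s' else False.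

Definition tsub (a b : term K) : term K := Add a (Scale (-1) b).

Definition tsum (s : seq (term K)) : term K := foldr (@Add K) Zero s.
Definition lprod (t : term K) (s : seq (term K)) : term K := foldl (@Mul K) t s.
(* t^n (n >= 1), left-normed: ((t t) t) ... *)
Definition tpow (t : term K) (n : nat) : term K := iter n.-1 (fun u => Mul u t) t.

Fixpoint subst (sx sy : nat -> term K) (t : term K) : term K :=
  match t with
  | Xv i => sx i
  | Yv i => sy i
  | Zero => Zero
  | Add a b => Add (subst sx sy a) (subst sx sy b)
  | Scale c a => Scale c (subst sx sy a)
  | Mul a b => Mul (subst sx sy a) (subst sx sy b)
  end.

(* syntactically homogeneous terms: parity false = even, true = odd
   (parity of the number of y's) *)
Inductive homog : bool -> term K -> Prop :=
  | homog_X i : homog false (Xv i)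
  | homog_Y i : homog true (Yv i)
  | homog_0 b : homog b Zero
  | homog_Add b t u : homog b t -> homog b u -> homog b (Add t u)
  | homog_Scale b c t : homog b t -> homog b (Scale c t)
  | homog_Mul b1 b2 t u : homog b1 t -> homog b2 u -> homog (b1 (+) b2) (Mul t u).

(* [cong G] is the congruence on terms generated by the axioms of (nonunital)
   K-algebras, the Jordan identities (commutativity and (a^2 b) a = a^2 (b a)),
   and  phi(g) = 0  for every g in G and every grading-preserving substitution
   phi (x_i |-> even element, y_i |-> odd element).  Hence the quotient by
   [cong (fun _ => False)] is the free Jordan algebra J(Z), and
   [cong G t Zero] says that (the class of) t lies in the T_2-ideal of J(Z)
   generated by G. *)
Inductive cong (G : term K -> Prop) : term K -> term K -> Prop :=
  | c_refl t : cong G t t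
  | c_sym t u : cong G t u -> cong G u t
  | c_trans t u v : cong G t u -> cong G u v -> cong G t v
  | c_Add t t' u u' : cong G t t' -> cong G u u' -> cong G (Add t u) (Add t' u')
  | c_Scale c t t' : cong G t t' -> cong G (Scale c t) (Scale c t')
  | c_Mul t t' u u' : cong G t t' -> cong G u u' -> cong G (Mul t u) (Mul t' u')
  | c_addA t u v : cong G (Add t (Add u v)) (Add (Add t u) v)
  | c_addC t u : cong G (Add t u) (Add u t)
  | c_add0 t : cong G (Add Zero t) t
  | c_addN t : cong G (Add t (Scale (-1) t)) Zero
  | c_scale1 t : cong G (Scale 1 t) t
  | c_scaleA a b t : cong G (Scale a (Scale b t)) (Scale (a * b) t)
  | c_scaleDl a b t : cong G (Scale (a + b) t) (Add (Scale a t) (Scale b t))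
  | c_scaleDr a t u : cong G (Scale a (Add t u)) (Add (Scale a t) (Scale a u))
  | c_mulDl t u v : cong G (Mul (Add t u) v) (Add (Mul t v) (Mul u v))
  | c_mulDr t u v : cong G (Mul t (Add u v)) (Add (Mul t u) (Mul t v))
  | c_mulZl a t u : cong G (Mul (Scale a t) u) (Scale a (Mul t u))
  | c_mulZr a t u : cong G (Mul t (Scale a u)) (Scale a (Mul t u))
  | c_mulC t u : cong G (Mul t u) (Mul u t)
  | c_jordan t u : cong G (Mul (Mul (Mul t t) u) t) (Mul (Mul t t) (Mul u t))
  | c_gen (sx sy : nat -> term K) g :
      (forall i, homog false (sx i)) -> (forall i, homog true (sy i)) ->
      G g -> cong G (subst sx sy g) Zero.

Definition inT2 (G : term K -> Prop) (t : term K) : Prop := cong G t Zero.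

Variable m : nat.
Variable F : 'M[K]_m.

Definition bform (u v : 'rV[K]_m) : K := (u *m F *m v^T) 0 0.

Definition Bmul (p q : K * 'rV[K]_m) : K * 'rV[K]_m :=
  (p.1 * q.1 + bform p.2 q.2, p.1 *: q.2 + q.1 *: p.2).

Fixpoint evalB (al : nat -> K) (v : nat -> 'rV[K]_m) (t : term K)
  : K * 'rV[K]_m :=
  match t with
  | Xv i => (al i, 0)
  | Yv i => (0, v i)
  | Zero => (0, 0)
  | Add a b => (evalB al v a + evalB al v b)%R
  | Scale c a => ((c * (evalB al v a).1), c *: (evalB al v a).2)
  | Mul a b => Bmul (evalB al v a) (evalB al v b)
  end.

Definition Id2 (t : term K) : Prop := forall al v, evalB al v t = (0, 0).

(* T_(n+1) = det (y_a y_b)_{a,b=1}^{n+1}, written via the Leibniz formula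
   (products left-normed; bracketing is immaterial in J(B_m)). *)
Definition Tterm (n : nat) : term K :=
  tsum [seq Scale ((-1) ^+ odd_perm s)
          (lprod (Mul (Yv 0) (Yv (s ord0)))
                 [seq Mul (Yv i) (Yv (s i)) | i : 'I_n.+1 <- behead (enum 'I_n.+1)])
       | s : {perm 'I_n.+1} <- enum {perm 'I_n.+1}].

(* S_(n+1) = sum_s (-1)^s y_{s(1)} (y_1 y_{s(2)}) ... (y_n y_{s(n+1)}) *)
Definition Sterm (n : nat) : term K :=
  tsum [seq Scale ((-1) ^+ odd_perm s)
          (lprod (Yv (s ord0))
                 [seq Mul (Yv i.-1) (Yv (s i)) | i : 'I_n.+1 <- behead (enum 'I_n.+1)])
       | s : {perm 'I_n.+1} <- enum {perm 'I_n.+1}].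

Inductive btree : Type := BLeaf of term K | BNode of btree & btree.

Fixpoint frontier (b : btree) : seq (term K) :=
  match b with BLeaf t => [:: t] | BNode l r => frontier l ++ frontier r end.

Fixpoint bterm (b : btree) : term K :=
  match b with BLeaf t => t | BNode l r => Mul (bterm l) (bterm r) end.

(* The factors of  x_1^{k0} (S_m~)^{d_m} ... (S_1~)^{d_1} (T_m~)^{k_m} ... (T_1~)^{k_1}
   in order, omitting factors with zero exponent.  Index l : 'I_m stands for
   l+1; [dl = Some l] means delta_(l+1) = 1 (and all other deltas are 0),
   [dl = None] means all deltas are 0. *)
Definition Pfactors (Tt St : 'I_m -> term K)
    (k0 : nat) (dl : option 'I_m) (ks : 'I_m -> nat) : seq (term K) :=
  (if k0 is 0 then [::] else [:: tpow (Xv 0) k0]) ++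
  (if dl is Some l then [:: St l] else [::]) ++
  flatten [seq (if ks l is 0 then [::] else [:: tpow (Tt l) (ks l)])
          | l <- rev (enum 'I_m)].

Definition inP (Tt St : 'I_m -> term K)
    (br : nat -> option 'I_m -> ('I_m -> nat) -> btree) (t : term K) : Prop :=
  exists k0 dl ks, Pfactors Tt St k0 dl ks <> [::] /\ t = bterm (br k0 dl ks).

End Terms.

(* Under the canonical evaluation, x_1 and every T_k take values in K = (B_m)_0,
   while an element of P has at most one factor (some S_l) that may take values
   in V.  On such products the multiplication of B_m is that of the commutative
   associative algebra K + V with V V = 0, so an element of P evaluates to its
   S-factor times a monomial in x_1 and the T_k.  Hence if the exponents of
   p, q in P have the same S-factor and those of q are dominated by those of p,
   then p - q x_1^a T_m^b_m ... T_1^b_1 (a, b the differences of exponents) is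
   a graded identity, so p lies in the T_2-ideal generated by q and Id_2(B_m).
   Dickson's lemma on the exponent vectors then gives the finite subset. *)

From HB Require Import structures.
From mathcomp Require Import all_boot all_order all_algebra all_fingroup.
From mathcomp Require Import zify.
From Stdlib Require Import Classical.
From Stdlib Require List.
Import GRing.Theory.

Set Implicit Arguments.
Unset Strict Implicit.
Unset Printing Implicit Defensive.

Section FinitelyBased.
Variables (I : Type) (R : I -> I -> Prop).

Definition based_by (S : I -> Prop) (L : seq I) :=
  (forall x, List.In x L -> S x) /\ (forall y, S y -> exists2 z, List.In z L & R z y).

Definition finitely_based (S : I -> Prop) := exists L, based_by S L.

Lemma finitely_based_eq (S S' : I -> Prop) :
  finitely_based S -> (forall x, S x <-> S' x) -> finitely_based S'.
Proof.
move=> [L [LS Lcov]] eqS; exists L; split=> [x /LS /eqS // | y /eqS].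
exact: Lcov.
Qed.

Lemma finitely_based_or (S1 S2 : I -> Prop) :
  finitely_based S1 -> finitely_based S2 -> finitely_based (fun x => S1 x \/ S2 x).
Proof.
move=> [L1 [L1S L1cov]] [L2 [L2S L2cov]]; exists (L1 ++ L2); split.
  by move=> x /(List.in_app_or L1 L2 x) [/L1S | /L2S]; [left | right].
move=> y [/L1cov [z zL Rzy] | /L2cov [z zL Rzy]]; exists z => //.
  by apply: List.in_or_app; left.
by apply: List.in_or_app; right.
Qed.

Lemma finitely_based_exists (A : finType) (P : A -> I -> Prop) :
  (forall a, finitely_based (P a)) -> finitely_based (fun x => exists a, P a x).
Proof.
move=> Pfb.
suff fb_seq (s : seq A) : finitely_based (fun x => exists2 a, a \in s & P a x).
  apply: (finitely_based_eq (fb_seq (enum A))) => x.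
  by split=> [[a _ Pax] | [a Pax]]; exists a; rewrite ?mem_enum.
elim: s => [|a s IHs]; first by exists [::]; split=> // y [].
apply: (finitely_based_eq (finitely_based_or (Pfb a) IHs)) => x; split.
  case=> [Pax | [b bs Pbx]]; first by exists a; rewrite ?mem_head.
  by exists b; rewrite // inE bs orbT.
by case=> b; rewrite inE => /orP [/eqP -> | bs] Pbx; [left | right; exists b].
Qed.

Lemma finitely_based_nonempty (S : I -> Prop) :
  (forall x0, S x0 -> finitely_based S) -> finitely_based S.
Proof.
move=> fbS; have [[x0 /fbS //] | noS] := classic (exists x0, S x0).
by exists [::]; split=> // y Sy; case: noS; exists y.
Qed.

End FinitelyBased.

Lemma finitely_based_weaken (I : Type) (R R' : I -> I -> Prop) (S : I -> Prop) :
  (forall z y, S z -> S y -> R z y -> R' z y) ->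
  finitely_based R S -> finitely_based R' S.
Proof.
move=> RR' [L [LS Lcov]]; exists L; split=> // y Sy.
by have [z zL Rzy] := Lcov y Sy; exists z; last exact: RR' (LS z zL) Sy Rzy.
Qed.

Definition dominated (I : Type) (n : nat) (enc : I -> 'I_n -> nat) (z y : I) :=
  forall i, enc z i <= enc y i.

Lemma dickson (I : Type) (n : nat) (enc : I -> 'I_n -> nat) (S : I -> Prop) :
  finitely_based (dominated enc) S.
Proof.
elim: n => [|n IHn] in enc S *; apply: finitely_based_nonempty => x0 Sx0.
  by exists [:: x0]; split=> [x [<-|] | y _] //; exists x0; [left | case].
(* An element of S not above x0 lies below x0 in some coordinate i; fixing the
   value c < x0_i of that coordinate leaves n free coordinates. *)
pose piece i (c : 'I_(enc x0 i)) y := S y /\ enc y i = c.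
have fb_piece i c : finitely_based (dominated enc) (piece i c).
  apply: finitely_based_weaken (IHn (fun y j => enc y (lift i j)) _).
  move=> z y [_ zi] [_ yi] dom k; case: (unliftP i k) => [j -> | ->].
    exact: dom.
  by rewrite zi yi.
have fb_above : finitely_based (dominated enc) (fun y => S y /\ dominated enc x0 y).
  exists [:: x0]; split=> [x [<-|] // | y [_ dom]]; last by exists x0; [left |].
  by split=> // i.
apply: (finitely_based_eq (finitely_based_or fb_above
  (finitely_based_exists (fun i => finitely_based_exists (fb_piece i))))) => y.
split=> [[[] | [i [c []]]] // | Sy].
have [dom | /forallPn [i]] := boolP [forall i, enc x0 i <= enc y i].
  by left; split=> // i; apply/forallP: dom i.
by rewrite -ltnNge => lt; right; exists i, (Ordinal lt).
Qed.

Lemma dickson_tagged (A : finType) (I : Type) (n : nat) (tag : I -> A)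
    (enc : I -> 'I_n -> nat) (S : I -> Prop) :
  finitely_based (fun z y => tag z = tag y /\ dominated enc z y) S.
Proof.
have fb_colour a : finitely_based (fun z y => tag z = tag y /\ dominated enc z y)
                    (fun x => S x /\ tag x = a).
  by apply: finitely_based_weaken (dickson enc _) => z y [_ ->] [_ ->].
apply: (finitely_based_eq (finitely_based_exists fb_colour)) => x.
by split=> [[a []] | Sx] //; exists (tag x).
Qed.

Local Open Scope ring_scope.

Section SquareZero.
Variables (K : fieldType) (m : nat).
Implicit Types p q r : K * 'rV[K]_m.

(* The product of the square-zero extension K + V; it agrees with that of B_m
   as soon as one factor lies in K (Bmul_dmul). *)
Definition dmul p q : K * 'rV[K]_m := (p.1 * q.1, p.1 *: q.2 + q.1 *: p.2).

Lemma dmulA : associative dmul.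
Proof.
move=> p q r; congr (_, _); first by rewrite mulrA.
by rewrite !scalerDr !scalerA addrA [r.1 * p.1]mulrC [r.1 * q.1]mulrC.
Qed.

Lemma dmulC : commutative dmul.
Proof. by move=> p q; rewrite /dmul mulrC addrC. Qed.

Lemma dmul1 : left_id (1, 0) dmul.
Proof. by move=> p; rewrite /dmul /= mul1r scale1r scaler0 addr0; case: p. Qed.

HB.instance Definition _ :=
  Monoid.isComLaw.Build _ ((1 : K), (0 : 'rV[K]_m)) dmul dmulA dmulC dmul1.

Definition scalar p := p.2 == 0.

Lemma big_dmul_scalar (s : seq (K * 'rV[K]_m)) : count (predC scalar) s = 0%N ->
  \big[dmul/(1, 0)]_(p <- s) p = (\prod_(p <- s) p.1, 0).
Proof.
elim: s => [|p s IHs] /=; first by rewrite !big_nil.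
rewrite !big_cons; case: p => a w; rewrite /scalar /=.
case: eqP => // -> /IHs ->.
by rewrite /dmul /= !scaler0 addr0.
Qed.

Lemma scalarE p : scalar p -> p = (p.1, 0).
Proof. by case: p => a w /eqP /= ->. Qed.

Lemma dmul_scalar (a b : K) : dmul (a, 0) (b, 0) = (a * b, 0).
Proof. by rewrite /dmul /= !scaler0 addr0. Qed.

Variable F : 'M[K]_m.

Lemma Bmul_dmul p q : scalar p || scalar q -> Bmul F p q = dmul p q.
Proof.
rewrite /Bmul /dmul /bform; case/orP => /eqP ->.
  by rewrite !mul0mx mxE addr0.
by rewrite trmx0 mulmx0 mxE addr0.
Qed.

End SquareZero.
Arguments dmul {K m}.
Arguments scalar {K m}.

Section Evaluation.
Variables (K : fieldType) (m : nat) (F : 'M[K]_m).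
Variables (al : nat -> K) (v : nat -> 'rV[K]_m).
Local Notation ev := (evalB F al v).

Lemma ev_homog b t : homog b t -> if b then (ev t).1 = 0 else (ev t).2 = 0.
Proof.
elim=> //= [b0 | b0 t1 u _ h1 _ h2 | b0 c t1 _ h | b1 b2 t1 u _ h1 _ h2].
- by case: b0.
- by case: b0 h1 h2 => -> ->; rewrite addr0.
- by case: b0 h => ->; rewrite ?mulr0 ?scaler0.
- rewrite /Bmul /bform; case: b1 b2 h1 h2 => [] [] /= -> ->.
  + by rewrite !scale0r addr0.
  + by rewrite trmx0 mulmx0 mxE mul0r add0r.
  + by rewrite !mul0mx mxE mulr0 addr0.
  + by rewrite !scaler0 addr0.
Qed.

Lemma ev_bterm b : (count (predC scalar) (map ev (frontier b)) <= 1)%N ->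
  ev (bterm b) = \big[dmul/(1, 0)]_(p <- map ev (frontier b)) p.
Proof.
elim: b => [t _ | l IHl r IHr] /=; first by rewrite big_seq1.
rewrite map_cat count_cat big_cat => le1.
rewrite IHl ?IHr; last 2 first.
- exact: leq_trans (leq_addl _ _) le1.
- exact: leq_trans (leq_addr _ _) le1.
apply: Bmul_dmul.
have [/big_dmul_scalar -> | /big_dmul_scalar ->] :
  count (predC scalar) (map ev (frontier l)) = 0%N \/
  count (predC scalar) (map ev (frontier r)) = 0%N by lia.
  by rewrite /scalar eqxx.
by rewrite /scalar eqxx orbT.
Qed.

Lemma ev_lprod t ts : count (predC scalar) (map ev ts) = 0%N ->
  ev (lprod t ts) = dmul (ev t) (\big[dmul/(1, 0)]_(p <- map ev ts) p).
Proof.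
elim: ts t => [|u ts IHts] t /=; first by rewrite big_nil Monoid.mulm1.
case su: (scalar (ev u)) => //= ts0.
rewrite /lprod /= -/(lprod (Mul t u) ts) IHts // big_cons Monoid.mulmA /=.
by rewrite Bmul_dmul // su orbT.
Qed.

Lemma ev_tpow t n : scalar (ev t) -> ev (tpow t n.+1) = ((ev t).1 ^+ n.+1, 0).
Proof.
move/scalarE; rewrite /tpow /=; set a := (ev t).1 => et.
elim: n => [|n IHn] /=; first exact: et.
rewrite IHn et Bmul_dmul; last by rewrite /scalar eqxx.
by rewrite dmul_scalar -exprSr.
Qed.

Lemma scalar_Xv i : scalar (ev (Xv i)).
Proof. exact: eqxx. Qed.

Definition powfactor (t : term K) (n : nat) : seq (term K) :=
  if n is 0 then [::] else [:: tpow t n].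

Lemma ev_powfactor t n : scalar (ev t) ->
  count (predC scalar) (map ev (powfactor t n)) = 0%N /\
  \big[dmul/(1, 0)]_(p <- map ev (powfactor t n)) p = ((ev t).1 ^+ n, 0).
Proof.
case: n => [|n] st /=; first by rewrite big_nil expr0.
by rewrite ev_tpow // big_seq1 /scalar eqxx.
Qed.

Lemma ev_powfactors (A : Type) (t : A -> term K) (e : A -> nat) (s : seq A) :
  (forall a, scalar (ev (t a))) ->
  count (predC scalar) (map ev (flatten [seq powfactor (t a) (e a) | a <- s])) = 0%N /\
  \big[dmul/(1, 0)]_(p <- map ev (flatten [seq powfactor (t a) (e a) | a <- s])) p =
    (\prod_(a <- s) (ev (t a)).1 ^+ e a, 0).
Proof.
move=> st; elim: s => [|a s [IH0 IHbig]] /=; first by rewrite !big_nil.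
have [a0 abig] := ev_powfactor (e a) (st a).
rewrite map_cat count_cat big_cat a0 IH0 abig IHbig big_cons.
by split=> //; apply: dmul_scalar.
Qed.

End Evaluation.

Lemma Id2_tsub (K : fieldType) (m : nat) (F : 'M[K]_m) (a b : term K) :
  Id2 F (tsub a b) <-> (forall al v, evalB F al v a = evalB F al v b).
Proof.
split=> eqab al v; have := eqab al v; rewrite /tsub /= mulN1r scaleN1r.
  case: (evalB F al v a) (evalB F al v b) => [x w] [y u] [/eqP + /eqP].
  by rewrite !subr_eq0 => /eqP -> /eqP ->.
by case: (evalB F al v a) => [x w] ->; rewrite /= !subrr.
Qed.

Section Terms.
Variable K : fieldType.

Lemma homog_tsum (A : Type) b (f : A -> term K) (s : seq A) :
  (forall a, homog b (f a)) -> homog b (tsum (map f s)).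
Proof. by move=> hf; elim: s => [|a s IHs] /=; [apply: homog_0 | apply: homog_Add]. Qed.

Lemma homog_lprod (A : Type) (f : A -> term K) (s : seq A) t :
  homog false t -> (forall a, homog false (f a)) -> homog false (lprod t (map f s)).
Proof.
move=> + hf; elim: s t => [|a s IHs] t ht //=.
exact: IHs (homog_Mul ht (hf a)).
Qed.

Lemma homog_Tterm n : homog false (Tterm K n).
Proof.
have homog_YY i j : homog false (Mul (@Yv K i) (Yv j)).
  exact: homog_Mul (homog_Y K i) (homog_Y K j).
by apply: homog_tsum => s; apply/homog_Scale/homog_lprod => [|i]; apply: homog_YY.
Qed.

Variable G : term K -> Prop.

Lemma subst_id (t : term K) : subst Xv Yv t = t.
Proof. by elim: t => //= [a -> b -> | c a -> | a -> b ->]. Qed.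

Lemma inT2_gen g : G g -> inT2 G g.
Proof.
by move=> Gg; rewrite /inT2 -(subst_id g); apply: c_gen => // i; constructor.
Qed.

Lemma cong_add_self t : cong G t (Add t t) -> inT2 G t.
Proof.
move=> tt; apply: c_sym; apply: c_trans (c_sym (c_addN _ t)) _.
apply: c_trans (c_Add tt (c_refl _ _)) _.
apply: c_trans (c_sym (c_addA _ _ _ _)) _.
apply: c_trans (c_Add (c_refl _ _) (c_addN _ _)) _.
exact: c_trans (c_addC _ _ _) (c_add0 _ _).
Qed.

Lemma inT2_mulr t u : inT2 G t -> inT2 G (Mul t u).
Proof.
move=> t0; apply: c_trans (c_Mul t0 (c_refl _ u)) _.
apply: cong_add_self.
exact: c_trans (c_Mul (c_sym (c_add0 _ Zero)) (c_refl _ u)) (c_mulDl _ _ _ _).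
Qed.

Lemma inT2_lprod t ts : inT2 G t -> inT2 G (lprod t ts).
Proof. by elim: ts t => [|u ts IHts] t //= t0; apply/IHts/inT2_mulr. Qed.

Lemma inT2_tsub a b : inT2 G (tsub a b) -> inT2 G b -> inT2 G a.
Proof.
move=> ab b0; apply: c_trans _ ab; apply: c_sym.
have scale0 : cong G (Scale (-1) Zero) Zero.
  apply: cong_add_self; apply: c_trans (c_Scale _ (c_sym (c_add0 _ Zero))) _.
  exact: c_scaleDr.
apply: c_trans (c_Add (c_refl _ a) (c_trans (c_Scale _ b0) scale0)) _.
exact: c_trans (c_addC _ _ _) (c_add0 _ _).
Qed.

End Terms.

Section SetP.
Variables (K : fieldType) (m : nat) (F : 'M[K]_m) (Tt St : 'I_m -> term K).
Hypothesis hT : forall l : 'I_m, Id2 F (tsub (Tt l) (Tterm K l)).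
Variable br : nat -> option 'I_m -> ('I_m -> nat) -> btree K.
Hypothesis hbr : forall k0 dl ks, Pfactors Tt St k0 dl ks <> [::] ->
  frontier (br k0 dl ks) = Pfactors Tt St k0 dl ks.

Definition s_factor (dl : option 'I_m) : seq (term K) :=
  if dl is Some l then [:: St l] else [::].

Definition xt_factors (k0 : nat) (ks : 'I_m -> nat) : seq (term K) :=
  powfactor (Xv 0) k0 ++ flatten [seq powfactor (Tt l) (ks l) | l <- rev (enum 'I_m)].

Lemma PfactorsE k0 dl ks : Pfactors Tt St k0 dl ks =
  powfactor (Xv 0) k0 ++ s_factor dl ++
  flatten [seq powfactor (Tt l) (ks l) | l <- rev (enum 'I_m)].
Proof. by []. Qed.

Section Valuation.
Variables (al : nat -> K) (v : nat -> 'rV[K]_m).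
Local Notation ev := (evalB F al v).

Lemma scalar_Tt l : scalar (ev (Tt l)).
Proof.
have /Id2_tsub -> := hT l.
exact/eqP/(ev_homog F al v (homog_Tterm K l)).
Qed.

Definition xt_monomial (k0 : nat) (ks : 'I_m -> nat) : K :=
  al 0 ^+ k0 * \prod_(l <- rev (enum 'I_m)) (ev (Tt l)).1 ^+ ks l.

Lemma ev_xt_factors k0 ks :
  count (predC scalar) (map ev (xt_factors k0 ks)) = 0%N /\
  \big[dmul/(1, 0)]_(p <- map ev (xt_factors k0 ks)) p = (xt_monomial k0 ks, 0).
Proof.
have [x0 xbig] := ev_powfactor k0 (scalar_Xv F al v 0).
have [t0 tbig] := ev_powfactors ks (rev (enum 'I_m)) scalar_Tt.
rewrite map_cat count_cat big_cat x0 t0 xbig tbig.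
by split=> //; apply: dmul_scalar.
Qed.

Lemma ev_Pterm k0 dl ks : Pfactors Tt St k0 dl ks <> [::] ->
  ev (bterm (br k0 dl ks)) =
    dmul (\big[dmul/(1, 0)]_(p <- map ev (s_factor dl)) p) (xt_monomial k0 ks, 0).
Proof.
move=> Pne; have [x0 _] := ev_powfactor k0 (scalar_Xv F al v 0).
have [t0 _] := ev_powfactors ks (rev (enum 'I_m)) scalar_Tt.
have [_ <-] := ev_xt_factors k0 ks.
rewrite ev_bterm hbr // PfactorsE !map_cat ?big_cat.
  by rewrite Monoid.mulmCA.
rewrite !count_cat x0 t0 addn0 (leq_trans (count_size _ _)) // size_map.
by case: dl {Pne}.
Qed.

Lemma xt_monomial_split k0 ks g0 gs :
  (g0 <= k0)%N -> (forall l, gs l <= ks l)%N ->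
  xt_monomial k0 ks =
    xt_monomial g0 gs * xt_monomial (k0 - g0) (fun l => ks l - gs l)%N.
Proof.
move=> le0 les; rewrite /xt_monomial mulrACA -(exprD (al 0)) subnKC // -big_split.
by congr (_ * _); apply: eq_bigr => l _ /=; rewrite -exprD subnKC.
Qed.

Lemma ev_Pterm_le k0 dl ks g0 gs :
  Pfactors Tt St k0 dl ks <> [::] -> Pfactors Tt St g0 dl gs <> [::] ->
  (g0 <= k0)%N -> (forall l, gs l <= ks l)%N ->
  ev (bterm (br k0 dl ks)) =
    ev (lprod (bterm (br g0 dl gs)) (xt_factors (k0 - g0) (fun l => ks l - gs l)%N)).
Proof.
move=> Pk Pg le0 les.
have [e0 ebig] := ev_xt_factors (k0 - g0) (fun l => ks l - gs l)%N.
rewrite ev_lprod // ebig !ev_Pterm // -Monoid.mulmA /=.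
by rewrite dmul_scalar -xt_monomial_split.
Qed.

End Valuation.

Lemma inT2_Pterm_le (G : term K -> Prop) k0 dl ks g0 gs :
  Pfactors Tt St k0 dl ks <> [::] -> Pfactors Tt St g0 dl gs <> [::] ->
  (g0 <= k0)%N -> (forall l, gs l <= ks l)%N ->
  (forall t, Id2 F t -> G t) -> G (bterm (br g0 dl gs)) ->
  inT2 G (bterm (br k0 dl ks)).
Proof.
move=> Pk Pg le0 les IdG Gg.
apply: (inT2_tsub (b := lprod _ (xt_factors (k0 - g0) (fun l => ks l - gs l)%N))).
  by apply/inT2_gen/IdG/Id2_tsub => al v; apply: ev_Pterm_le.
exact/inT2_lprod/inT2_gen.
Qed.

End SetP.

Lemma memT_map (K : fieldType) (A : Type) (f : A -> term K) (s : seq A) (t : term K) :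
  memT t (map f s) <-> exists2 a, List.In a s & f a = t.
Proof.
elim: s => [|a s IHs] /=; first by split=> // [[]].
rewrite IHs; split=> [[<- | [b bs <-]] | [b [<- | bs] <-]].
- by exists a; first left.
- by exists b; first right.
- by left.
- by right; exists b.
Qed.

Theorem lemma4p4 (K : fieldType) (charK : [pchar K] =i pred0)
  (m : nat) (hm : (1 < m)%N)
  (F : 'M[K]_m) (Fsym : F^T = F) (Fnd : F \in unitmx)
  (Tt St : 'I_m -> term K)
  (hT : forall l : 'I_m, Id2 F (tsub (Tt l) (Tterm K l)))
  (hS : forall l : 'I_m, Id2 F (tsub (St l) (Sterm K l)))
  (br : nat -> option 'I_m -> ('I_m -> nat) -> btree K)
  (hbr : forall k0 dl ks, Pfactors Tt St k0 dl ks <> [::] ->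
           frontier (br k0 dl ks) = Pfactors Tt St k0 dl ks)
  (S : term K -> Prop)
  (hSP : forall t, S t -> inP Tt St br t) :
  exists Sh : seq (term K),
    (forall t, memT t Sh -> S t) /\
    (forall t, S t -> inT2 (fun g => memT g Sh \/ Id2 F g) t).
Proof.
pose I := (nat * option 'I_m * ('I_m -> nat))%type.
pose P (j : I) := bterm (br j.1.1 j.1.2 j.2).
pose inS (j : I) := Pfactors Tt St j.1.1 j.1.2 j.2 <> [::] /\ S (P j).
pose exponents (j : I) (i : 'I_m.+1) :=
  if unlift ord0 i is Some l then j.2 l else j.1.1.
have [L [LS Lcov]] := dickson_tagged (fun j : I => j.1.2) exponents inS.
exists (map P L); split; first by move=> t /memT_map [j /LS [_ Sj] <-].
move=> t tS; have [k0 [dl [ks [Pk et]]]] := hSP t tS; subst t.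
have [[[g0 dg] gs] gL [/= edg dom]] := Lcov (k0, dl, ks) (conj Pk tS); subst dg.
have [Pg _] := LS _ gL.
apply: (inT2_Pterm_le hT hbr Pk Pg).
- by have := dom ord0; rewrite /exponents unlift_none.
- by move=> l; have := dom (lift ord0 l); rewrite /exponents liftK.
- by move=> g; right.
- by left; apply/memT_map; exists (g0, dl, gs).
Qed.
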